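(* Let $\kappa$ be a regular infinite cardinal, let $\eta > \kappa^{++}$ be an ordinal, and let $f = \langle \kappa_\xi : \xi < \eta\rangle$ be the cardinal sequence of some LCS space. Let $\alpha < \eta$ be an ordinal with $\mathrm{cf}(\alpha) > \kappa^+$ such that there is a strictly increasing sequence of ordinals $\langle \alpha_\xi : \xi < \mathrm{cf}(\alpha)\rangle$ converging to $\alpha$ with $\kappa_{\alpha_\xi} \le \kappa$ for every $\xi < \mathrm{cf}(\alpha)$. Then $\kappa_\alpha \le \kappa$.
   Context: An LCS space is a locally compact, Hausdorff, scattered topological space. For an LCS space $X$ and an ordinal $\alpha$, the $\alpha$-th Cantor–Bendixson level $I_\alpha(X)$ is the set of isolated points of $X \setminus \bigcup\{I_\beta(X) : \beta < \alpha\}$. The reduced height $\mathrm{ht}^-(X)$ is the least ordinal $\delta$ such that $I_\delta(X)$ is finite. The cardinal sequence of $X$ is $\mathrm{CS}(X) = \langle |I_\alpha(X)| : \alpha < \mathrm{ht}^-(X)\rangle$. A sequence $f$ of cardinals is ''the cardinal sequence of some LCS space'' if $f = \mathrm{CS}(X)$ for some LCS space $X$. *)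

From Stdlib Require Import List Classical.

Definition card_le (A B : Type) : Prop :=
  exists f : A -> B, forall x y, f x = f y -> x = y.
Definition card_lt (A B : Type) : Prop := card_le A B /\ ~ card_le B A.

Definition succ_card (A B : Type) : Prop :=
  card_lt A B /\ forall C : Type, card_lt C B -> card_le C A.

Definition finite_set {X : Type} (A : X -> Prop) : Prop :=
  exists l : list X, forall x, A x -> In x l.

Definition well_order {T : Type} (lt : T -> T -> Prop) : Prop :=
  (forall x, ~ lt x x) /\
  (forall x y z, lt x y -> lt y z -> lt x z) /\
  (forall x y, lt x y \/ x = y \/ lt y x) /\
  well_founded lt.

(* K (with its well-order ltK) is an infinite regular cardinal, presented as
   an initial ordinal: every proper initial segment has smaller cardinality,
   K is infinite, and every unbounded subset of K has cardinality |K|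
   (i.e. cf(kappa) = kappa). *)
Definition infinite_regular_cardinal (K : Type) (ltK : K -> K -> Prop) : Prop :=
  well_order ltK /\
  (forall k : K, card_lt {j : K | ltK j k} K) /\
  ~ finite_set (fun _ : K => True) /\
  (forall S : K -> Prop,
      (forall k, exists j, S j /\ ~ ltK j k) -> card_le K {j : K | S j}).

Definition cofinal_in {W : Type} (ltW : W -> W -> Prop) (alpha : W)
  (S : W -> Prop) : Prop :=
  (forall v, S v -> ltW v alpha) /\
  (forall u, ltW u alpha -> exists v, S v /\ ~ ltW v u).

Definition cf_gt {W : Type} (ltW : W -> W -> Prop) (alpha : W) (Kp : Type) : Prop :=
  forall S : W -> Prop, cofinal_in ltW alpha S -> ~ card_le {v : W | S v} Kp.

Record topology (X : Type) := {
  open : (X -> Prop) -> Prop;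
  open_full : open (fun _ => True);
  open_union : forall F : (X -> Prop) -> Prop,
      (forall U, F U -> open U) -> open (fun x => exists U, F U /\ U x);
  open_inter : forall U V, open U -> open V -> open (fun x => U x /\ V x)
}.
Arguments open {X} t U.

Definition compact {X : Type} (t : topology X) (C : X -> Prop) : Prop :=
  forall F : (X -> Prop) -> Prop,
    (forall U, F U -> open t U) ->
    (forall x, C x -> exists U, F U /\ U x) ->
    exists l : list (X -> Prop),
      (forall U, In U l -> F U) /\ (forall x, C x -> exists U, In U l /\ U x).

Definition hausdorff {X : Type} (t : topology X) : Prop :=
  forall x y, x <> y -> exists U V, open t U /\ open t V /\ U x /\ V y /\
    (forall z, U z -> V z -> False).

Definition locally_compact {X : Type} (t : topology X) : Prop :=
  forall x, exists U C, open t U /\ U x /\ (forall y, U y -> C y) /\ compact t C.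

Definition isolated_in {X : Type} (t : topology X) (A : X -> Prop) (x : X) : Prop :=
  A x /\ exists U, open t U /\ U x /\ (forall y, U y -> A y -> y = x).

Definition scattered {X : Type} (t : topology X) : Prop :=
  forall A : X -> Prop, (exists x, A x) -> exists x, isolated_in t A x.

Definition LCS {X : Type} (t : topology X) : Prop :=
  locally_compact t /\ hausdorff t /\ scattered t.

(* I is the family of Cantor-Bendixson levels of (X,t) indexed by the
   ordinals of the well-ordered type W:
   I w = isolated points of X \ U_{v<w} I v. *)
Definition CB_levels {X W : Type} (t : topology X) (ltW : W -> W -> Prop)
  (I : W -> X -> Prop) : Prop :=
  forall w x, I w x <-> isolated_in t (fun y => ~ exists v, ltW v w /\ I v y) x.

(* The cardinal sequence of (X,t) is <|I w| : w in W>, i.e. W has order type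
   ht^-(X): all levels indexed by W are infinite and the next level
   (isolated points of X \ U_{w in W} I w) is finite. *)
Definition is_cardinal_sequence {X W : Type} (t : topology X)
  (ltW : W -> W -> Prop) (I : W -> X -> Prop) : Prop :=
  CB_levels t ltW I /\
  (forall w, ~ finite_set (I w)) /\
  finite_set (isolated_in t (fun y => ~ exists w, I w y)).

From Stdlib Require Import List Classical ClassicalEpsilon FunctionalExtensionality PropExtensionality.

(* Suppose |I_alpha| > kappa and let rho be the least ordinal with |rho| > kappa; as
   eta > kappa^++, every ordinal below rho has size <= kappa and |rho| <= kappa^+.
   Give each point of level alpha an open neighbourhood with compact closure that meets
   the levels >= alpha only in that point; by compactness, the neighbourhoods of two
   distinct such points meet only in levels <= some beta < alpha.  Fix rho distinct
   points of I_alpha.  Since cf(alpha) > kappa^+, the levels beta attached to the pairs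
   among them are bounded by some delta < alpha.  Pick alpha_xi > delta: each of the rho
   neighbourhoods contains a point of level alpha_xi, and these points are pairwise
   distinct, so |rho| <= kappa_{alpha_xi} <= kappa, a contradiction. *)

Lemma proj1_sig_inj {A : Type} {P : A -> Prop} (p q : {x | P x}) :
  proj1_sig p = proj1_sig q -> p = q.
Proof.
  destruct p as [x Px], q as [y Py]; simpl; intros ->.
  f_equal. apply proof_irrelevance.
Qed.

Lemma list_restrict {A : Type} (P : A -> Prop) (l : list A) :
  exists l', (forall x, In x l' -> P x) /\ (forall x, In x l -> P x -> In x l').
Proof.
  exists (filter (fun x => if excluded_middle_informative (P x) then true else false) l).
  split; intros x; rewrite filter_In;
    destruct (excluded_middle_informative (P x)); intuition discriminate.
Qed.

Lemma card_le_trans (A B C : Type) : card_le A B -> card_le B C -> card_le A C.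
Proof. intros [f Hf] [g Hg]. exists (fun x => g (f x)). auto. Qed.

Lemma card_le_image {A B : Type} (f : A -> B) : card_le {b | exists a, b = f a} A.
Proof.
  destruct (choice (fun (p : {b | exists a, b = f a}) a => proj1_sig p = f a)) as [g Hg].
  { intros [b Hb]. exact Hb. }
  exists g. intros p q E. apply proj1_sig_inj. rewrite (Hg p), (Hg q), E. reflexivity.
Qed.

Lemma card_le_of_surj {A B : Type} (f : A -> B) :
  (forall b, exists a, b = f a) -> card_le B A.
Proof.
  intros Hf. refine (card_le_trans _ _ _ _ (card_le_image f)).
  exists (fun b => exist _ b (Hf b)). intros b c E. exact (f_equal (@proj1_sig _ _) E).
Qed.

Lemma inhabited_of_not_card_le {A B : Type} : ~ card_le A B -> inhabited A.
Proof.
  intros H. apply NNPP. intros Hempty. apply H.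
  exists (fun a => match Hempty (inhabits a) with end).
  intros a. exfalso. exact (Hempty (inhabits a)).
Qed.

Section WellOrder.
Context {W : Type} {ltW : W -> W -> Prop} (wo : well_order ltW).

Lemma wo_irrefl x : ~ ltW x x.
Proof. exact (proj1 wo x). Qed.

Lemma wo_trans x y z : ltW x y -> ltW y z -> ltW x z.
Proof. exact (proj1 (proj2 wo) x y z). Qed.

Lemma wo_trichotomy x y : ltW x y \/ x = y \/ ltW y x.
Proof. exact (proj1 (proj2 (proj2 wo)) x y). Qed.

Lemma wo_wf : well_founded ltW.
Proof. exact (proj2 (proj2 (proj2 wo))). Qed.

Lemma wo_asym x y : ltW x y -> ~ ltW y x.
Proof. intros Hxy Hyx. exact (wo_irrefl x (wo_trans x y x Hxy Hyx)). Qed.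

(* The transfinite recursion picks at each v < rho a value avoiding all earlier ones;
   one is left because A is larger than {u | u < v}. *)
Lemma initial_segment_injection {A : Type} (rho : W) :
  inhabited A -> (forall v, ltW v rho -> ~ card_le A {u | ltW u v}) ->
  exists h : W -> A, forall u v, ltW u rho -> ltW v rho -> h u = h v -> u = v.
Proof.
  intros inh Hbig.
  pose (F := fun (v : W) (rec : forall u, ltW u v -> A) =>
    epsilon inh (fun a => forall u (H : ltW u v), a <> rec u H)).
  pose (h := Fix wo_wf (fun _ => A) F).
  assert (Hh : forall v, h v = F v (fun u _ => h u)).
  { intros v. apply (Fix_eq wo_wf (fun _ => A) F). intros x f g Hfg. unfold F.
    replace f with g; [reflexivity |].
    apply functional_extensionality_dep; intros u.
    apply functional_extensionality_dep; intros H. symmetry. apply Hfg. }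
  assert (Hfresh : forall v, ltW v rho -> forall u, ltW u v -> h v <> h u).
  { intros v Hv. rewrite (Hh v).
    apply (epsilon_spec inh (fun a => forall u (H : ltW u v), a <> h u)).
    apply NNPP. intros Hcovered. apply (Hbig v Hv).
    apply (card_le_of_surj (fun p : {u | ltW u v} => h (proj1_sig p))).
    intros a. apply NNPP. intros Hna. apply Hcovered. exists a.
    intros u Hu E. apply Hna. exists (exist _ u Hu). exact E. }
  exists h. intros u v Hu Hv E.
  destruct (wo_trichotomy u v) as [Huv | [Huv | Hvu]]; [| exact Huv |]; exfalso.
  - exact (Hfresh v Hv u Huv (eq_sym E)).
  - exact (Hfresh u Hu v Hvu E).
Qed.

End WellOrder.

Lemma well_founded_least {T : Type} {R : T -> T -> Prop} (wf : well_founded R)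
  (P : T -> Prop) : (exists x, P x) -> exists x, P x /\ forall y, R y x -> ~ P y.
Proof.
  intros [x Px]. revert Px. induction x as [x IH] using (well_founded_induction wf).
  intros Px. destruct (classic (exists y, R y x /\ P y)) as [[y [Ry Py]] | Hmin].
  - exact (IH y Ry Py).
  - exists x. split; [exact Px |]. intros y Ry Py. apply Hmin. exists y. split; assumption.
Qed.

Section Cofinality.
Context {W : Type} {ltW : W -> W -> Prop} (alpha : W) (Kp : Type)
  (Hcf : cf_gt ltW alpha Kp).

Lemma cf_gt_exists_lt : exists u, ltW u alpha.
Proof.
  apply NNPP. intros Hnone. apply (Hcf (fun _ => False)).
  - split; [intros v [] |]. intros u Hu. exfalso. apply Hnone. exists u. exact Hu.
  - exists (fun p : {v : W | False} => match proj2_sig p with end). intros [x []].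
Qed.

Lemma cf_gt_bounded (S : W -> Prop) :
  (forall v, S v -> ltW v alpha) -> card_le {v | S v} Kp ->
  exists d, ltW d alpha /\ forall v, S v -> ltW v d.
Proof.
  intros HS HSKp. apply NNPP. intros Hunb. apply (Hcf S); [| exact HSKp].
  split; [exact HS |]. intros u Hu. apply NNPP. intros Hnot. apply Hunb.
  exists u. split; [exact Hu |]. intros v Sv. apply NNPP. intros Hvu.
  apply Hnot. exists v. split; assumption.
Qed.

Lemma cf_gt_bound_family {A : Type} (P : A -> Prop) (R : A -> W -> Prop) :
  card_le {a | P a} Kp -> (forall a, P a -> exists c, ltW c alpha /\ R a c) ->
  exists d, ltW d alpha /\ forall a, P a -> exists c, ltW c d /\ R a c.
Proof.
  intros HP HR.
  destruct (choice (fun (p : {a | P a}) c => ltW c alpha /\ R (proj1_sig p) c)) as [f Hf].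
  { intros [a Pa]. exact (HR a Pa). }
  destruct (cf_gt_bounded (fun c => exists p, c = f p)) as [d [Hd Hdf]].
  - intros c [p ->]. apply Hf.
  - exact (card_le_trans _ _ _ (card_le_image f) HP).
  - exists d. split; [exact Hd |]. intros a Pa. exists (f (exist _ a Pa)).
    split; [apply Hdf; eexists; reflexivity | exact (proj2 (Hf (exist _ a Pa)))].
Qed.

(* The set of pairs below rho need not have size <= kappa^+, so the bound is taken in
   two rounds: over u < v for each v, then over v < rho. *)
Lemma cf_gt_bound_pairs (wo : well_order ltW) (rho : W) (R : W -> W -> W -> Prop) :
  card_le {v | ltW v rho} Kp -> (forall v, ltW v rho -> card_le {u | ltW u v} Kp) ->
  (forall u v, ltW u v -> ltW v rho -> exists c, ltW c alpha /\ R u v c) ->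
  exists d, ltW d alpha /\ forall u v, ltW u v -> ltW v rho -> exists c, ltW c d /\ R u v c.
Proof.
  intros Hrho Hseg HR.
  destruct (cf_gt_bound_family (fun v => ltW v rho)
    (fun v e => forall u, ltW u v -> exists c, ltW c e /\ R u v c) Hrho) as [d [Hd Hde]].
  { intros v Hv. apply (cf_gt_bound_family (fun u => ltW u v) (fun u c => R u v c) (Hseg v Hv)).
    intros u Huv. exact (HR u v Huv Hv). }
  exists d. split; [exact Hd |]. intros u v Huv Hv.
  destruct (Hde v Hv) as [e [He Hue]]. destruct (Hue u Huv) as [c [Hc Rc]].
  exists c. split; [exact (wo_trans wo _ _ _ Hc He) | exact Rc].
Qed.

End Cofinality.

Section Topology.
Context {X : Type} (t : topology X).

Lemma open_of_local (U : X -> Prop) :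
  (forall x, U x -> exists O, open t O /\ O x /\ forall z, O z -> U z) -> open t U.
Proof.
  intros H.
  replace U with (fun x => exists O, (open t O /\ forall z, O z -> U z) /\ O x).
  - apply open_union. intros O [HO _]. exact HO.
  - apply functional_extensionality. intros x. apply propositional_extensionality. split.
    + intros [O [[_ HOU] Ox]]. exact (HOU x Ox).
    + intros Ux. destruct (H x Ux) as [O [HO [Ox HOU]]]. exists O. auto.
Qed.

Lemma compact_setminus_open (C M : X -> Prop) :
  compact t C -> open t M -> compact t (fun z => C z /\ ~ M z).
Proof.
  intros HC HM F HF Hcov.
  destruct (HC (fun U => F U \/ U = M)) as [l [Hl1 Hl2]].
  - intros U [FU | ->]; auto.
  - intros x Cx. destruct (classic (M x)) as [Mx | nMx].
    + exists M. auto.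
    + destruct (Hcov x (conj Cx nMx)) as [U [FU Ux]]. exists U. auto.
  - destruct (list_restrict F l) as [l' [Hl'F Hll']].
    exists l'. split; [exact Hl'F |]. intros x [Cx nMx].
    destruct (Hl2 x Cx) as [U [InU Ux]].
    destruct (Hl1 U InU) as [FU | ->]; [exists U; auto | contradiction].
Qed.

Lemma separate_point_compact (D : X -> Prop) (y : X) :
  hausdorff t -> compact t D -> ~ D y ->
  exists N M, open t N /\ open t M /\ N y /\ (forall z, D z -> M z) /\
    (forall z, N z -> M z -> False).
Proof.
  intros Hh HD nDy.
  destruct (HD (fun B => open t B /\
                  exists A, open t A /\ A y /\ forall z, A z -> B z -> False))
    as [l [Hl1 Hl2]].
  - intros U [HU _]. exact HU.
  - intros z Dz. assert (Hyz : y <> z) by (intros ->; contradiction).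
    destruct (Hh y z Hyz) as [A [B [HA [HB [Ay [Bz Hd]]]]]].
    exists B. split; [split; [exact HB | exists A; auto] | exact Bz].
  - assert (HN : exists N, open t N /\ N y /\
                   forall B, In B l -> forall z, N z -> B z -> False).
    { clear Hl2. induction l as [|B l IH].
      - exists (fun _ => True). split; [apply open_full |]. split; [exact I |]. intros B [].
      - destruct IH as [N [HN [Ny HNl]]]; [intros U HU; apply Hl1; right; exact HU |].
        destruct (Hl1 B (or_introl eq_refl)) as [_ [A [HA [Ay Hd]]]].
        exists (fun z => N z /\ A z). split; [apply open_inter; assumption |].
        split; [split; assumption |].
        intros B' [<- | HB'] z [Nz Az] Bz; [exact (Hd z Az Bz) | exact (HNl B' HB' z Nz Bz)]. }
    destruct HN as [N [HN [Ny HNl]]].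
    exists N, (fun x => exists U, In U l /\ U x).
    split; [exact HN |]. split; [apply open_union; intros U HU; exact (proj1 (Hl1 U HU)) |].
    split; [exact Ny |]. split; [exact Hl2 |].
    intros z Nz [U [InU Uz]]. exact (HNl U InU z Nz Uz).
Qed.

Lemma compact_nbhd_within (U : X -> Prop) (y : X) :
  locally_compact t -> hausdorff t -> open t U -> U y ->
  exists V Q, open t V /\ V y /\ compact t Q /\ (forall z, V z -> Q z) /\
    (forall z, Q z -> U z).
Proof.
  intros Hlc Hh HU Uy.
  destruct (Hlc y) as [O [C [HO [Oy [HOC HC]]]]].
  assert (HUO : open t (fun z => U z /\ O z)) by (apply open_inter; assumption).
  destruct (separate_point_compact _ y Hh (compact_setminus_open C _ HC HUO))
    as [N [M [HN [HM [Ny [HDM HNM]]]]]].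
  { intros [_ Hout]. exact (Hout (conj Uy Oy)). }
  exists (fun z => N z /\ (U z /\ O z)), (fun z => C z /\ ~ M z).
  split; [apply open_inter; assumption |]. split; [split; [exact Ny | split; assumption] |].
  split; [exact (compact_setminus_open C M HC HM) |]. split.
  - intros z [Nz [Uz Oz]]. split; [exact (HOC z Oz) | intros Mz; exact (HNM z Nz Mz)].
  - intros z [Cz nMz]. apply NNPP. intros nUz. apply nMz. apply HDM.
    split; [exact Cz | intros [Uz _]; exact (nUz Uz)].
Qed.

End Topology.

Section Levels.
Context {X W : Type} (t : topology X) (ltW : W -> W -> Prop) (I : W -> X -> Prop).
Hypothesis wo : well_order ltW.
Hypothesis cb : CB_levels t ltW I.

Definition levels_upto (b : W) (z : X) : Prop := exists u, ~ ltW b u /\ I u z.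

Lemma level_unique (u v : W) (z : X) : I u z -> I v z -> u = v.
Proof.
  intros Iu Iv. destruct (wo_trichotomy wo u v) as [Huv | [Huv | Hvu]]; [| exact Huv |]; exfalso.
  - apply (proj1 (proj1 (cb v z) Iv)). exists u. split; assumption.
  - apply (proj1 (proj1 (cb u z) Iu)). exists v. split; assumption.
Qed.

Lemma levels_upto_open (b : W) : open t (levels_upto b).
Proof.
  apply open_of_local. intros x [u [Hbu Iux]].
  destruct (proj1 (cb u x) Iux) as [_ [O [HO [Ox HOx]]]].
  exists O. split; [exact HO |]. split; [exact Ox |].
  intros z Oz. destruct (classic (exists v, ltW v u /\ I v z)) as [[v [Hvu Ivz]] | Hlow].
  - exists v. split; [| exact Ivz]. intros Hbv. exact (Hbu (wo_trans wo _ _ _ Hbv Hvu)).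
  - rewrite (HOx z Oz Hlow). exists u. split; assumption.
Qed.

Lemma levels_upto_mono (b1 b2 : W) (z : X) :
  ~ ltW b2 b1 -> levels_upto b1 z -> levels_upto b2 z.
Proof.
  intros Hb [u [Hb1u Iuz]]. exists u. split; [| exact Iuz]. intros Hb2u.
  destruct (wo_trichotomy wo b1 u) as [Hb1u' | [-> | Hub1]].
  - exact (Hb1u Hb1u').
  - exact (Hb Hb2u).
  - exact (Hb (wo_trans wo _ _ _ Hb2u Hub1)).
Qed.

(* Each point of level d is a limit of points of every lower level g: otherwise it would
   already be isolated among the points of level >= g. *)
Lemma lower_level_meets_nbhd (d : W) (z : X) (g : W) (V : X -> Prop) :
  I d z -> ltW g d -> open t V -> V z -> exists z', V z' /\ I g z'.
Proof.
  revert z g V. induction d as [d IH] using (well_founded_induction (wo_wf wo)).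
  intros z g V Idz Hgd HV Vz.
  destruct (proj1 (cb d z) Idz) as [Hz_low [O [HO [Oz HOz]]]].
  apply NNPP. intros Hmiss. apply Hz_low. exists g. split; [exact Hgd |].
  apply (proj2 (cb g z)). split.
  - intros [v [Hvg Ivz]]. apply Hz_low. exists v. split; [exact (wo_trans wo _ _ _ Hvg Hgd) | exact Ivz].
  - exists (fun x => V x /\ O x). split; [apply open_inter; assumption |].
    split; [split; assumption |].
    intros y [Vy Oy] Hy_low. apply NNPP. intros Hyz.
    assert (Hy : exists v, ltW v d /\ I v y) by (apply NNPP; intros Hn; exact (Hyz (HOz y Oy Hn))).
    destruct Hy as [v [Hvd Ivy]].
    destruct (wo_trichotomy wo v g) as [Hvg | [-> | Hgv]].
    + apply Hy_low. exists v. split; assumption.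
    + apply Hmiss. exists y. split; assumption.
    + exact (Hmiss (IH v Hvd y g V Ivy Hgv HV Vy)).
Qed.

Lemma levels_cover_bounded (alpha : W) (N : X -> Prop) (l : list (X -> Prop)) :
  (exists u, ltW u alpha) ->
  (forall P, In P l -> P = N \/ exists u, ltW u alpha /\ P = levels_upto u) ->
  exists b, ltW b alpha /\ forall P, In P l -> forall z, P z -> N z \/ levels_upto b z.
Proof.
  intros [b0 Hb0]. induction l as [|P l IH]; intros Hl.
  - exists b0. split; [exact Hb0 | intros P []].
  - destruct IH as [b [Hb HbP]]; [intros Q HQ; apply Hl; right; exact HQ |].
    destruct (Hl P (or_introl eq_refl)) as [-> | [u [Hu ->]]].
    + exists b. split; [exact Hb |].
      intros Q [<- | HQ] z Qz; [left; exact Qz | exact (HbP Q HQ z Qz)].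
    + destruct (classic (ltW b u)) as [Hbu | Hbu].
      * exists u. split; [exact Hu |]. intros Q [<- | HQ] z Qz; [right; exact Qz |].
        destruct (HbP Q HQ z Qz) as [Nz | Lz]; [left; exact Nz |].
        right. exact (levels_upto_mono b u z (wo_asym wo _ _ Hbu) Lz).
      * exists b. split; [exact Hb |]. intros Q [<- | HQ] z Qz.
        -- right. exact (levels_upto_mono u b z Hbu Qz).
        -- exact (HbP Q HQ z Qz).
Qed.

Lemma compact_below_level_bounded (alpha : W) (Q N : X -> Prop) :
  (exists u, ltW u alpha) -> compact t Q -> open t N ->
  (forall z, Q z -> N z \/ exists u, ltW u alpha /\ I u z) ->
  exists b, ltW b alpha /\ forall z, Q z -> N z \/ levels_upto b z.
Proof.
  intros Hne HQ HN HQcov.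
  destruct (HQ (fun P => P = N \/ exists u, ltW u alpha /\ P = levels_upto u)) as [l [Hl1 Hl2]].
  - intros P [-> | [u [_ ->]]]; [exact HN | apply levels_upto_open].
  - intros z Qz. destruct (HQcov z Qz) as [Nz | [u [Hu Iuz]]].
    + exists N. split; [left; reflexivity | exact Nz].
    + exists (levels_upto u). split; [right; exists u; split; [exact Hu | reflexivity] |].
      exists u. split; [apply (wo_irrefl wo) | exact Iuz].
  - destruct (levels_cover_bounded alpha N l Hne Hl1) as [b [Hb HbP]].
    exists b. split; [exact Hb |]. intros z Qz.
    destruct (Hl2 z Qz) as [P [InP Pz]]. exact (HbP P InP z Pz).
Qed.

Lemma isolating_compact_nbhd (alpha : W) (x : X) :
  locally_compact t -> hausdorff t -> I alpha x ->
  exists V Q, open t V /\ V x /\ compact t Q /\ (forall z, V z -> Q z) /\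
    (forall z, Q z -> z = x \/ exists u, ltW u alpha /\ I u z).
Proof.
  intros Hlc Hh Ix. destruct (proj1 (cb alpha x) Ix) as [_ [U [HU [Ux HUx]]]].
  destruct (compact_nbhd_within t U x Hlc Hh HU Ux) as [V [Q [HV [Vx [HQ [HVQ HQU]]]]]].
  exists V, Q. split; [exact HV |]. split; [exact Vx |]. split; [exact HQ |].
  split; [exact HVQ |]. intros z Qz.
  destruct (classic (exists u, ltW u alpha /\ I u z)) as [Hlow | Hlow].
  - right. exact Hlow.
  - left. exact (HUx z (HQU z Qz) Hlow).
Qed.

Lemma level_separated_nbhds (alpha : W) :
  locally_compact t -> hausdorff t -> (exists u, ltW u alpha) ->
  exists V : {x | I alpha x} -> X -> Prop,
    (forall p, open t (V p) /\ V p (proj1_sig p)) /\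
    (forall p q, p <> q ->
       exists b, ltW b alpha /\ forall z, V p z -> V q z -> levels_upto b z).
Proof.
  intros Hlc Hh Hne.
  destruct (choice (fun (p : {x | I alpha x}) (VQ : (X -> Prop) * (X -> Prop)) =>
      open t (fst VQ) /\ fst VQ (proj1_sig p) /\ compact t (snd VQ) /\
      (forall z, fst VQ z -> snd VQ z) /\
      (forall z, snd VQ z -> z = proj1_sig p \/ exists u, ltW u alpha /\ I u z)))
    as [VQ HVQ].
  { intros [x Ix]. destruct (isolating_compact_nbhd alpha x Hlc Hh Ix) as [V [Q HVQ]].
    exists (V, Q). exact HVQ. }
  exists (fun p => fst (VQ p)). split.
  - intros p. destruct (HVQ p) as [HV [Vp _]]. split; assumption.
  - intros p q Hpq.
    destruct (HVQ p) as [_ [_ [HQ [HVQp HQp]]]].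
    destruct (HVQ q) as [_ [_ [HQ' [HVQq HQq]]]].
    destruct (separate_point_compact t (snd (VQ q)) (proj1_sig p) Hh HQ')
      as [N [M [HN [HM [Np [HQM HNM]]]]]].
    { intros Qp. destruct (HQq _ Qp) as [E | [u [Hu Iup]]].
      - exact (Hpq (proj1_sig_inj p q E)).
      - rewrite (level_unique _ _ _ Iup (proj2_sig p)) in Hu. exact (wo_irrefl wo _ Hu). }
    destruct (compact_below_level_bounded alpha (snd (VQ p)) N Hne HQ HN) as [b [Hb HbQ]].
    { intros z Qz. destruct (HQp z Qz) as [-> | Hlow]; [left; exact Np | right; exact Hlow]. }
    exists b. split; [exact Hb |]. intros z Vpz Vqz.
    destruct (HbQ z (HVQp z Vpz)) as [Nz | Lz]; [| exact Lz].
    exfalso. exact (HNM z Nz (HQM z (HVQq z Vqz))).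
Qed.

Lemma card_le_lower_level (alpha gamma rho : W) (V : W -> X -> Prop) :
  ltW gamma alpha ->
  (forall v, ltW v rho -> open t (V v) /\ exists x, V v x /\ I alpha x) ->
  (forall u v, ltW u v -> ltW v rho ->
     exists b, ltW b gamma /\ forall z, V u z -> V v z -> levels_upto b z) ->
  card_le {v | ltW v rho} {z | I gamma z}.
Proof.
  intros Hga HV Hdisj.
  destruct (choice (fun (p : {v | ltW v rho}) z => V (proj1_sig p) z /\ I gamma z)) as [zf Hzf].
  { intros [v Hv]. destruct (HV v Hv) as [HVv [x [Vx Ix]]].
    exact (lower_level_meets_nbhd alpha x gamma (V v) Ix Hga HVv Vx). }
  assert (Hdistinct : forall u v (Hu : ltW u rho) (Hv : ltW v rho),
             ltW u v -> zf (exist _ u Hu) <> zf (exist _ v Hv)).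
  { intros u v Hu Hv Huv E.
    destruct (Hzf (exist _ u Hu)) as [Vu _]. destruct (Hzf (exist _ v Hv)) as [Vv Iv].
    simpl in Vu, Vv. rewrite E in Vu.
    destruct (Hdisj u v Huv Hv) as [b [Hb Hbz]].
    destruct (Hbz _ Vu Vv) as [w [Hbw Iw]].
    rewrite (level_unique _ _ _ Iw Iv) in Hbw. exact (Hbw Hb). }
  exists (fun p => exist (I gamma) (zf p) (proj2 (Hzf p))).
  intros [u Hu] [v Hv] E. apply proj1_sig_inj; simpl.
  apply (f_equal (@proj1_sig _ _)) in E; simpl in E.
  destruct (wo_trichotomy wo u v) as [Huv | [Huv | Hvu]]; [| exact Huv |]; exfalso.
  - exact (Hdistinct _ _ _ _ Huv E).
  - exact (Hdistinct _ _ _ _ Hvu (eq_sym E)).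
Qed.

End Levels.

Theorem proposition1p1
  (K : Type) (ltK : K -> K -> Prop) (Kp Kpp : Type)
  (W : Type) (ltW : W -> W -> Prop)
  (X : Type) (t : topology X) (I : W -> X -> Prop)
  (alpha : W) :
  infinite_regular_cardinal K ltK ->
  succ_card K Kp ->
  succ_card Kp Kpp ->
  well_order ltW ->
  (* eta > kappa^++ *)
  (exists w : W, card_le Kpp {v : W | ltW v w}) ->
  (* f = <kappa_xi : xi < eta> is the cardinal sequence of the LCS space X *)
  LCS t ->
  is_cardinal_sequence t ltW I ->
  (* cf(alpha) > kappa^+ *)
  cf_gt ltW alpha Kp ->
  (* a strictly increasing sequence <alpha_xi : xi < cf(alpha)> converging
     to alpha with kappa_{alpha_xi} <= kappa *)
  (exists (C : Type) (ltC : C -> C -> Prop) (a : C -> W),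
      well_order ltC /\
      (* the order type of C is cf(alpha) (given that a is cofinal below):
         C order-embeds into every cofinal subset of alpha *)
      (forall S : W -> Prop, cofinal_in ltW alpha S ->
         exists e : C -> {v : W | S v},
           forall x y, ltC x y -> ltW (proj1_sig (e x)) (proj1_sig (e y))) /\
      (forall x y, ltC x y -> ltW (a x) (a y)) /\
      (forall x, ltW (a x) alpha) /\
      (forall u, ltW u alpha -> exists x, ltW u (a x)) /\
      (forall x, card_le {y : X | I (a x) y} K)) ->
  card_le {y : X | I alpha y} K.
Proof.
  intros _ [[HKKp HnKpK] _] [[HKpKpp _] _] wo [w Hw] [Hlc [Hh _]] [cb _] Hcf
    [C [ltC [a [_ [_ [_ [Ha_lt [Ha_cof Ha_card]]]]]]]].
  apply NNPP. intros Hlarge.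
  destruct (well_founded_least (wo_wf wo) (fun v => ~ card_le {u | ltW u v} K))
    as [rho [Hrho Hmin]].
  { exists w. intros HwK. exact (HnKpK (card_le_trans _ _ _ HKpKpp (card_le_trans _ _ _ Hw HwK))). }
  assert (Hsmall : forall v, ltW v rho -> card_le {u | ltW u v} K)
    by (intros v Hv; exact (NNPP _ (Hmin v Hv))).
  assert (HrhoKp : card_le {u | ltW u rho} Kp).
  { destruct (initial_segment_injection wo rho (inhabited_of_not_card_le HnKpK)) as [h Hinj].
    - intros v Hv HKpv. exact (HnKpK (card_le_trans _ _ _ HKpv (Hsmall v Hv))).
    - exists (fun p => h (proj1_sig p)). intros p q E.
      exact (proj1_sig_inj p q (Hinj _ _ (proj2_sig p) (proj2_sig q) E)). }
  destruct (initial_segment_injection wo rho (inhabited_of_not_card_le Hlarge)) as [y Hy].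
  { intros v Hv HIv. exact (Hlarge (card_le_trans _ _ _ HIv (Hsmall v Hv))). }
  destruct (level_separated_nbhds t ltW I wo cb alpha Hlc Hh (cf_gt_exists_lt alpha Kp Hcf))
    as [V [HV Hsep]].
  destruct (cf_gt_bound_pairs alpha Kp Hcf wo rho
              (fun u v c => forall z, V (y u) z -> V (y v) z -> levels_upto ltW I c z) HrhoKp)
    as [d [Hd Hbound]].
  - intros v Hv. exact (card_le_trans _ _ _ (Hsmall v Hv) HKKp).
  - intros u v Huv Hv. apply Hsep. intros E.
    rewrite (Hy u v (wo_trans wo _ _ _ Huv Hv) Hv E) in Huv. exact (wo_irrefl wo v Huv).
  - destruct (Ha_cof d Hd) as [x Hdx].
    apply Hrho. apply (fun H => card_le_trans _ _ _ H (Ha_card x)).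
    apply (card_le_lower_level t ltW I wo cb alpha (a x) rho (fun v => V (y v)) (Ha_lt x)).
    + intros v _. split; [exact (proj1 (HV (y v))) |].
      exists (proj1_sig (y v)). split; [exact (proj2 (HV (y v))) | exact (proj2_sig (y v))].
    + intros u v Huv Hv. destruct (Hbound u v Huv Hv) as [c [Hc Hcz]].
      exists c. split; [exact (wo_trans wo _ _ _ Hc Hdx) | exact Hcz].
Qed.
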